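(* Let $n\ge 2$, let $P\neq[n,n-1,\ldots,1]$ be an arithmetically progressed permutation of length $n$ with ratio $k$, and let $\mathsf{T}_P$ be its associated ternary string. Then the matrix-based BWT of $\mathsf{T}_P$ coincides with the suffix-array-based BWT of $\mathsf{T}_P$.
   Context: Alphabet $\{\mathtt{a}<\mathtt{b}<\mathtt{c}\}$, lexicographic order $\prec$ with a proper prefix smaller than the longer string; suffix array $\mathsf{SA}_{\mathsf{T}}$: permutation of $[1..n]$ such that $\mathsf{T}[\mathsf{SA}_{\mathsf{T}}[i]..n]$ is the $i$-th smallest suffix. $x\bmod n$ denotes the representative of $x$ modulo $n$ in $[1..n]$. An arithmetically progressed permutation of length $n$ with ratio $k\in[1..n-1]$ is a permutation $P=[p_1,\ldots,p_n]$ of $[1..n]$ with $p_{i+1}=p_i+k\bmod n$. Ternary string associated with $P$: cut $P$ immediately after the entry $n-k$ and immediately after the entry $(p_1-k-1)\bmod n$, giving consecutive possibly empty blocks $A,B,C$ with $P=ABC$; set $\mathsf{T}_P[p_i]=\mathtt{a},\mathtt{b},\mathtt{c}$ according as $p_i$ lies in $A$, $B$, $C$. Suffix-array-based BWT: $\mathsf{BWT}_{\mathsf{T}}[i]=\mathsf{T}[\mathsf{SA}_{\mathsf{T}}[i]-1\bmod n]$. Matrix-based BWT: sort the $n$ cyclic rotations $\mathsf{T}[j..n]\mathsf{T}[1..j-1]$ lexicographically and read, top to bottom, the last character of each sorted rotation. *)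

From mathcomp Require Import all_boot.
Set Implicit Arguments. Unset Strict Implicit. Unset Printing Implicit Defensive.

(* Letters: a = 0, b = 1, c = 2 (so a < b < c is the order on nat).
   Strings are [seq nat]; positions are 1-based as in the paper:
   T[j] = nth 0 T j.-1, and T[j..n] = drop j.-1 T. *)
Definition chr_a := 0.
Definition chr_b := 1.
Definition chr_c := 2.

Fixpoint lexle (s t : seq nat) : bool :=
  match s, t with
  | [::], _ => true
  | _ :: _, [::] => false
  | x :: s', y :: t' => (x < y) || ((x == y) && lexle s' t')
  end.

(* x mod n : the representative of x modulo n in [1..n] (for n >= 1). *)
Definition amod (m n : nat) : nat := ((m + n.-1) %% n).+1.

Definition is_APP (n k : nat) (P : seq nat) : Prop :=
  [/\ perm_eq P (iota 1 n), 1 <= k <= n.-1 &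
      forall i, i.+1 < n -> nth 0 P i.+1 = amod (nth 0 P i + k) n].

(* Ternary string associated with P: cut P immediately after the entry n-k
   and immediately after the entry (p_1 - k - 1) mod n (computed as
   (p_1 + n - k - 1) mod n, which is congruent and non-negative).
   [lo] and [hi] are the lengths of the prefixes ending at the two cuts,
   ordered, so that A = P[1..lo], B = P[lo+1..hi], C = P[hi+1..n]. *)
Definition ternary (n k : nat) (P : seq nat) : seq nat :=
  let x := amod (head 0 P + n - k - 1) n in
  let c1 := (index (n - k) P).+1 in
  let c2 := (index x P).+1 in
  let lo := minn c1 c2 in
  let hi := maxn c1 c2 in
  [seq (let pos := index j P in
        if pos < lo then chr_a else if pos < hi then chr_b else chr_c)
  | j <- iota 1 (size P)].

Definition suffix_array (T : seq nat) : seq nat :=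
  sort (fun i j => lexle (drop i.-1 T) (drop j.-1 T)) (iota 1 (size T)).

Definition bwt_sa (T : seq nat) : seq nat :=
  [seq nth 0 T (amod (i - 1) (size T)).-1 | i <- suffix_array T].

Definition bwt_matrix (T : seq nat) : seq nat :=
  [seq last 0 r | r <- sort lexle [seq rot j.-1 T | j <- iota 1 (size T)]].

From mathcomp Require Import all_boot zify.
Set Implicit Arguments. Unset Strict Implicit. Unset Printing Implicit Defensive.

(* The letter of T at position u only depends
   on the rank of u in P and is a non-decreasing function of that rank,
   jumping exactly after the entries n - k and x = (p_1 - k - 1) mod n.
   Since the entry following u in P is u + k, comparing the rotations (or
   suffixes) starting at u and at u + k letter by letter, the letters of
   the first never exceed those of the second, and become strictly smaller
   no later than when position x is reached; before that the entry n - k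
   is never crossed, which guarantees that suffixes are not cut short.
   Hence P lists both the rotations and the suffixes of T in strictly
   increasing order, so the two sorted orders of the positions coincide,
   and the two BWTs then agree (the last letter of the rotation starting at
   j is T[j - 1 mod n]).  The argument does not need the hypothesis
   P <> [n, ..., 1]. *)

Lemma amod_id u n : 0 < u <= n -> amod u n = u.
Proof.
move=> /andP[u0 un]; rewrite /amod.
have -> : u + n.-1 = u.-1 + n by lia.
by rewrite modnDr modn_small; lia.
Qed.

Lemma amod_range m n : 0 < n -> 0 < amod m n <= n.
Proof. by move=> n0; rewrite /amod /= ltn_pmod. Qed.

Lemma amod_eq m m' n : m = m' %[mod n] -> amod m n = amod m' n.
Proof. by move=> h; rewrite /amod -modnDml h modnDml. Qed.

Lemma amod_inv m m' n : amod m n = amod m' n -> m = m' %[mod n].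
Proof. by rewrite /amod => -[] /eqP; rewrite eqn_modDr => /eqP. Qed.

Lemma amod_mod m n : 0 < n -> amod m n = m %[mod n].
Proof.
move=> n0; rewrite /amod -addn1 modnDml -addnA addn1 prednK //.
by rewrite modnDr.
Qed.

Lemma amodD m j n : 0 < n -> amod (amod m n + j) n = amod (m + j) n.
Proof. by move=> n0; apply: amod_eq; rewrite -modnDml amod_mod // modnDml. Qed.

Definition lexlt (s t : seq nat) : bool := lexle s t && ~~ lexle t s.

Lemma lexle_trans : transitive lexle.
Proof.
move=> t s u; elim: s t u => [//|x s IH] [//|y t] [//|z u] /=.
case/orP=> [xy | /andP[/eqP <- st]]; case/orP=> [yz | /andP[/eqP <- tu]].
- by rewrite (ltn_trans xy yz).
- by rewrite xy.
- by rewrite yz.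
- by rewrite eqxx (IH _ _ st tu) orbT.
Qed.

Lemma lexle_total : total lexle.
Proof.
elim=> [//|x s IH] [|y t] //=.
by case: (ltngtP x y) => //= <-; rewrite eqxx /= IH.
Qed.

Lemma lexlt_trans : transitive lexlt.
Proof.
move=> t s u /andP[st nts] /andP[tu nut]; rewrite /lexlt (lexle_trans st tu) /=.
by apply: contra nut => us; apply: lexle_trans us st.
Qed.

Lemma lexlt_first_diff s t d :
  (forall i, i < d -> nth 0 s i = nth 0 t i) -> d < size t ->
  d = size s \/ (d < size s /\ nth 0 s d < nth 0 t d) ->
  lexlt s t.
Proof.
rewrite /lexlt; elim: s t d => [|x s IH] [|y t] d //= heq dt hd.
case: d heq dt hd => [|d] heq dt hd.
  case: hd => [//|[_ xy]]; rewrite xy /=.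
  by rewrite ltnNge (ltnW xy) /= eq_sym (ltn_eqF xy).
have <- : x = y by exact: (heq 0).
rewrite ltnn eqxx /=; apply: (IH t d) => //.
  by move=> i id; exact: (heq i.+1).
by case: hd => [[->]|[]]; [left|right].
Qed.

Lemma lexlt_mkseq (f g : nat -> nat) a b d :
  (forall i, i < d -> f i = g i) -> f d < g d -> minn a d < b ->
  lexlt (mkseq f a) (mkseq g b).
Proof.
move=> heq fg hab; case: (leqP a d) => ad.
  apply: (lexlt_first_diff (d := a)); rewrite ?size_mkseq; try lia.
  by move=> i ia; rewrite !nth_mkseq ?heq //; lia.
apply: (lexlt_first_diff (d := d)); rewrite ?size_mkseq; try lia.
  by move=> i id; rewrite !nth_mkseq ?heq //; lia.
by right; rewrite !nth_mkseq //; lia.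
Qed.

Lemma sort_strictly_sorted (f : nat -> seq nat) (P : seq nat) n :
  perm_eq P (iota 1 n) -> sorted (relpre f lexlt) P ->
  sort (relpre f lexle) (iota 1 n) = P.
Proof.
move=> pP sP; symmetry; apply: (sorted_eq_in (leT := relpre f lexle)).
- by move=> y x z _ _ _; apply: lexle_trans.
- move=> x y xP yP /andP[xy yx]; apply/eqP; apply: contraT => neq.
  have lt_tr : transitive (relpre f lexlt) by move=> ???; apply: lexlt_trans.
  have := sorted_ltn_index lt_tr sP.
  case: (ltngtP (index x P) (index y P)) => [hi|hi|hi] hlt.
  + by have /andP[_] := hlt x y xP yP hi; rewrite [lexle _ _]yx.
  + by have /andP[_] := hlt y x yP xP hi; rewrite [lexle _ _]xy.
  + by move: neq; rewrite -(nth_index 0 xP) hi nth_index ?eqxx.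
- by apply: sub_sorted sP => x y /andP[].
- by apply: sort_sorted => x y; apply: lexle_total.
- by rewrite perm_sym perm_sort perm_sym.
Qed.

Definition cyc (T : seq nat) (m : nat) : nat := nth 0 T (amod m (size T)).-1.

Lemma cyc_amod T m i : 0 < size T -> cyc T (amod m (size T) + i) = cyc T (m + i).
Proof. by move=> T0; rewrite /cyc amodD. Qed.

Lemma rot_cyc T u : 0 < u <= size T ->
  rot u.-1 T = mkseq (fun i => cyc T (u + i)) (size T).
Proof.
move=> hu; set n := size T; apply: (@eq_from_nth _ 0).
  by rewrite size_rot size_mkseq.
move=> i; rewrite size_rot => hi; rewrite nth_mkseq // /cyc /amod -/n nth_cat size_drop.
case: ifP => h.
  rewrite nth_drop (_ : u + i + n.-1 = u.-1 + i + n); last by lia.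
  by rewrite modnDr modn_small //; lia.
rewrite nth_take; last by lia.
rewrite (_ : u + i + n.-1 = 2 * n + (i - (n - u.-1))); last by lia.
by rewrite modnMDl modn_small //; lia.
Qed.

Lemma drop_cyc T u : 0 < u <= size T ->
  drop u.-1 T = mkseq (fun i => cyc T (u + i)) (size T - u.-1).
Proof.
move=> hu; set n := size T; apply: (@eq_from_nth _ 0).
  by rewrite size_drop size_mkseq.
move=> i; rewrite size_drop => hi; rewrite nth_mkseq // /cyc /amod -/n nth_drop.
rewrite (_ : u + i + n.-1 = u.-1 + i + n); last by lia.
by rewrite modnDr modn_small //; lia.
Qed.

Lemma last_rot T u : 0 < u <= size T ->
  last 0 (rot u.-1 T) = nth 0 T (amod (u - 1) (size T)).-1.
Proof.
move=> hu; rewrite rot_cyc // -nth_last size_mkseq nth_mkseq; last by lia.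
by rewrite /cyc (@amod_eq _ (u - 1)) // (_ : u + _ = u - 1 + size T) ?modnDr //; lia.
Qed.

Lemma bwt_agree T :
  sort (relpre (fun j => rot j.-1 T) lexle) (iota 1 (size T)) = suffix_array T ->
  bwt_matrix T = bwt_sa T.
Proof.
rewrite /bwt_matrix /bwt_sa sort_map => ->; rewrite -map_comp.
apply/eq_in_map => j; rewrite (perm_mem (permEl (perm_sort _ _))) mem_iota => hj /=.
by rewrite last_rot //; lia.
Qed.

Definition band (c1 c2 i : nat) : nat :=
  if i < minn c1 c2 then chr_a else if i < maxn c1 c2 then chr_b else chr_c.

Lemma band_mono c1 c2 i j : i <= j -> band c1 c2 i <= band c1 c2 j.
Proof.
rewrite /band /chr_a /chr_b /chr_c => ij.
by case: (ltnP i (minn c1 c2)); case: (ltnP i (maxn c1 c2));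
   case: (ltnP j (minn c1 c2)); case: (ltnP j (maxn c1 c2)); lia.
Qed.

Lemma band_cut c1 c2 c : 0 < c -> c = c1 \/ c = c2 -> band c1 c2 c.-1 < band c1 c2 c.
Proof.
rewrite /band /chr_a /chr_b /chr_c => c0 hc.
by case: (ltnP c.-1 (minn c1 c2)); case: (ltnP c.-1 (maxn c1 c2));
   case: (ltnP c (minn c1 c2)); case: (ltnP c (maxn c1 c2)); lia.
Qed.

Lemma nth_ternary n k P u : 0 < u <= size P ->
  nth 0 (ternary n k P) u.-1 =
  band (index (n - k) P).+1 (index (amod (head 0 P + n - k - 1) n) P).+1 (index u P).
Proof.
move=> hu; rewrite /ternary (nth_map 0); last by rewrite size_iota; lia.
by rewrite nth_iota; [rewrite (_ : 1 + u.-1 = u) //; lia | lia].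
Qed.

Section ArithmeticProgression.

Variables (n k : nat) (P : seq nat).
Hypothesis hP : is_APP n k P.

Let p1 := head 0 P.

Lemma APP_k_range : 0 < k < n.
Proof. by case: hP => _ /andP[k1 kn] _; lia. Qed.

Lemma APP_n_gt0 : 0 < n.
Proof. by case: hP => _ /andP[k1 kn] _; lia. Qed.

Lemma APP_uniq : uniq P.
Proof. by case: hP => pP _ _; rewrite (perm_uniq pP) iota_uniq. Qed.

Lemma APP_size : size P = n.
Proof. by case: hP => pP _ _; rewrite (perm_size pP) size_iota. Qed.

Lemma APP_mem u : (u \in P) = (0 < u <= n).
Proof. by case: hP => pP _ _; rewrite (perm_mem pP) mem_iota; lia. Qed.

Definition rk (m : nat) : nat := index (amod m n) P.

Lemma rk_lt m : rk m < n.
Proof. by rewrite /rk -[X in _ < X]APP_size index_mem APP_mem amod_range // APP_n_gt0. Qed.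

Lemma nth_rk m : nth 0 P (rk m) = amod m n.
Proof. by rewrite nth_index // APP_mem amod_range // APP_n_gt0. Qed.

Lemma rk_nth i : i < n -> rk (nth 0 P i) = i.
Proof.
move=> hi; have hPi : nth 0 P i \in P by rewrite mem_nth // APP_size.
by rewrite /rk amod_id -?APP_mem // index_uniq ?APP_size ?APP_uniq.
Qed.

Lemma rk_inj m m' : rk m = rk m' -> m = m' %[mod n].
Proof. by move=> e; apply: amod_inv; rewrite -!nth_rk e. Qed.

Lemma rk_mod m m' : m = m' %[mod n] -> rk m = rk m'.
Proof. by move=> e; rewrite /rk (amod_eq e). Qed.

Lemma rk_succ m : (rk m).+1 < n -> rk (m + k) = (rk m).+1.
Proof.
case: hP => _ _ rec hlt; rewrite -[RHS]rk_nth // rec // nth_rk.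
by rewrite /rk (amod_id (amod_range _ APP_n_gt0)) amodD // APP_n_gt0.
Qed.

Lemma head_range : 0 < p1 <= n.
Proof. by rewrite -APP_mem /p1 -nth0 mem_nth // APP_size APP_n_gt0. Qed.

(* The entry (p_1 - k - 1) mod n, after which the second cut is made. *)
Let x := amod (p1 + n - k - 1) n.

(* x + 1 is the last entry of P: its successor x + 1 + k is p_1. *)
Lemma rk_last : rk (x + 1) = n.-1.
Proof.
have := rk_lt (x + 1); case: (ltnP (rk (x + 1)).+1 n) => [hlt _|]; last by lia.
have : rk (x + 1 + k) = rk p1.
  apply: rk_mod; rewrite /x -addnA -modnDml amod_mod ?APP_n_gt0 // modnDml.
  have [p0 _] := andP head_range; have [_ kn] := andP APP_k_range.
  by rewrite (_ : _ + (1 + k) = p1 + n) ?modnDr //; lia.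
by rewrite rk_succ // /p1 -nth0 rk_nth ?APP_n_gt0.
Qed.

Let T := ternary n k P.

Lemma size_T : size T = n.
Proof. by rewrite /T /ternary size_map size_iota APP_size. Qed.

Lemma cyc_T m : cyc T m = band (rk (n - k)).+1 (rk x).+1 (rk m).
Proof.
have n0 := APP_n_gt0; have [k0 kn] := andP APP_k_range.
rewrite /cyc size_T nth_ternary ?APP_size ?amod_range //.
by rewrite /rk /x (amod_id (amod_range _ n0)) [amod (n - k) n]amod_id //; lia.
Qed.

Lemma cyc_T_amod m i : cyc T (amod m n + i) = cyc T (m + i).
Proof. by rewrite -size_T cyc_amod // size_T APP_n_gt0. Qed.

Lemma cyc_le_shift m : (rk m).+1 < n -> cyc T m <= cyc T (m + k).
Proof. by move=> hlt; rewrite !cyc_T rk_succ // band_mono. Qed.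

Lemma cyc_lt_shift m : (rk m).+1 < n -> amod m n = n - k \/ amod m n = x ->
  cyc T m < cyc T (m + k).
Proof.
move=> hlt hcut; rewrite !cyc_T rk_succ //; apply: band_cut => //.
by case: hcut => e; [left | right]; congr _.+1; apply: rk_mod;
   rewrite -amod_mod ?APP_n_gt0 // e.
Qed.

Lemma first_difference t m : (rk m).+1 < n -> amod (m + t) n = x ->
  exists d, [/\ d <= t,
    forall i, i < d -> cyc T (m + i) = cyc T (m + k + i) /\ amod (m + i) n != n - k
  & cyc T (m + d) < cyc T (m + k + d)].
Proof.
elim: t m => [|t IH] m hlt hx.
  by exists 0; rewrite !addn0; split => //; apply: cyc_lt_shift => //; right; rewrite -hx addn0.
case: (ltnP (cyc T m) (cyc T (m + k))) => hcmp.
  by exists 0; rewrite !addn0.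
have heq : cyc T m = cyc T (m + k) by have := cyc_le_shift hlt; lia.
have hnot : ~ (amod m n = n - k \/ amod m n = x) by move/(cyc_lt_shift hlt); lia.
have hlt' : (rk m.+1).+1 < n.
  have := rk_lt m.+1; case: (ltnP (rk m.+1).+1 n) => // hge _.
  have e : rk m.+1 = rk (x + 1) by rewrite rk_last; have := rk_lt m.+1; lia.
  case: hnot; right; move/rk_inj: e; rewrite -addn1 => /eqP; rewrite eqn_modDr.
  by move=> /eqP /amod_eq ->; rewrite amod_id // amod_range // APP_n_gt0.
have [d [hdt hagree hlt_d]] := IH m.+1 hlt' (etrans (congr1 (amod^~ n) (addSnnS m t)) hx).
exists d.+1; split => //.
- case=> [|i] hi; first by rewrite !addn0; split => //; apply/eqP => e; apply: hnot; left.
  by rewrite -addSnnS (_ : m + k + i.+1 = m.+1 + k + i); [apply: hagree | lia].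
- by rewrite -addSnnS (_ : m + k + d.+1 = m.+1 + k + d) //; lia.
Qed.

Lemma reach_x m : exists2 t, t < n & amod (m + t) n = x.
Proof.
have n0 := APP_n_gt0; exists ((x + n - m %% n) %% n); first by rewrite ltn_mod.
rewrite -[RHS](amod_id (amod_range _ n0)); apply: amod_eq.
rewrite modnDmr -modnDml (_ : m %% n + _ = x + n) ?modnDr //.
by have := ltn_pmod m n0; lia.
Qed.

Lemma rot_lexlt u : 0 < u <= n -> (rk u).+1 < n ->
  lexlt (rot u.-1 T) (rot (amod (u + k) n).-1 T).
Proof.
move=> hu hlt; have [t tn ht] := reach_x u.
have [d [hdt hagree hdiff]] := first_difference hlt ht.
rewrite !rot_cyc ?size_T ?amod_range ?APP_n_gt0 //.
apply: (lexlt_mkseq (d := d)).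
- by move=> i /hagree[-> _]; rewrite cyc_T_amod.
- by rewrite cyc_T_amod.
- lia.
Qed.

(* The same holds for suffixes: the entry n - k, whose suffix ends right
   where the suffix at n ends, is never reached before the difference. *)
Lemma drop_lexlt u : 0 < u <= n -> (rk u).+1 < n ->
  lexlt (drop u.-1 T) (drop (amod (u + k) n).-1 T).
Proof.
move=> hu hlt; have [t tn ht] := reach_x u.
have [d [hdt hagree hdiff]] := first_difference hlt ht.
have [k0 kn] := andP APP_k_range.
rewrite !drop_cyc ?size_T ?amod_range ?APP_n_gt0 //.
apply: (lexlt_mkseq (d := d)).
- by move=> i /hagree[-> _]; rewrite cyc_T_amod.
- by rewrite cyc_T_amod.
case: (leqP (u + k) n) => huk.
  have : d <= n - (u + k).
    rewrite leqNgt; apply/negP => hd; have := (hagree _ hd).2.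
    by rewrite (_ : u + (n - (u + k)) = n - k) ?amod_id ?eqxx //; lia.
  by rewrite amod_id; lia.
rewrite (@amod_eq _ (u + k - n)) ?amod_id; try lia.
by rewrite -{1}(subnK (ltnW huk)) modnDr.
Qed.

Lemma APP_sorted (f : nat -> seq nat) :
  (forall u, 0 < u <= n -> (rk u).+1 < n -> lexlt (f u) (f (amod (u + k) n))) ->
  sorted (relpre f lexlt) P.
Proof.
move=> hf; apply/(sortedP 0) => i; rewrite APP_size => hi.
case: hP => _ _ rec; rewrite /= rec //; apply: hf.
  by rewrite -APP_mem mem_nth // APP_size; lia.
by rewrite rk_nth //; lia.
Qed.

End ArithmeticProgression.

Theorem theorem4 (n k : nat) (P : seq nat) :
  2 <= n -> is_APP n k P -> P != rev (iota 1 n) ->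
  bwt_matrix (ternary n k P) = bwt_sa (ternary n k P).
Proof.
move=> _ hP _; have pP : perm_eq P (iota 1 n) by case: hP.
apply: bwt_agree; rewrite /suffix_array size_T //.
rewrite (sort_strictly_sorted pP (APP_sorted hP (rot_lexlt hP))).
by rewrite (sort_strictly_sorted pP (APP_sorted hP (drop_lexlt hP))).
Qed.
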